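(* Let $\Delta=(\alpha_1,\dots,\alpha_N)$ be ordered. Let $B\subset{\cal B}(\Delta)$ be the set of bases $b=(\alpha_{i_1},\dots,\alpha_{i_r})$, $i_1<\dots<i_r$, such that for every index $j\notin\{i_1,\dots,i_r\}$ the set $\{\alpha_j\}\cup\{\alpha_{i_p}: i_p>j\}$ is linearly independent. Then $(\phi_b)_{b\in B}$ is a basis of $S_\Delta$. Moreover, consider the space of all linear relations $\sum_{\sigma\in{\cal B}(\Delta)}c_\sigma\phi_\sigma=0$, i.e. the kernel of the map from the free vector space on symbols $[\sigma]$, $\sigma\in{\cal B}(\Delta)$, to $R_\Delta$. This space is spanned by the Orlik–Solomon relations $$r_{\sigma,\alpha}=[\sigma]-\sum_{\beta\in\sigma,\ c_{\alpha\beta}\ne0}c_{\alpha\beta}\,[\sigma\cup\{\alpha\}\setminus\{\beta\}],$$ for $\sigma\in{\cal B}(\Delta)$ and $\alpha\in\Delta\setminus\sigma$, where $\alpha=\sum_{\beta\in\sigma}c_{\alpha\beta}\beta$.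
   Context: Let $k$ be a field of characteristic zero, $V$ a $k$-vector space of dimension $r$, and $V^*$ its dual, with $S(V)$ identified with polynomial functions on $V^*$. Let $\Delta\subset V$ be a finite set of nonzero vectors spanning $V$, and $R_\Delta=\Delta^{-1}S(V)$ (rational functions on $V^*$ with the elements of $\Delta$ inverted). ${\cal B}(\Delta)$ is the set of subsets of $\Delta$ forming a basis of $V$. For $\sigma\in{\cal B}(\Delta)$, $\phi_\sigma=1/\prod_{\alpha\in\sigma}\alpha$. $S_\Delta$ is the $k$-span of the $\phi_\sigma$, $\sigma\in{\cal B}(\Delta)$. Note that for $c_{\alpha\beta}\neq0$, $\sigma\cup\{\alpha\}\setminus\{\beta\}\in{\cal B}(\Delta)$. *)

From HB Require Import structures.
From mathcomp Require Import all_boot all_order all_algebra.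
From mathcomp Require Import fraction.
From mathcomp Require Import mpoly.
Set Implicit Arguments. Unset Strict Implicit. Unset Printing Implicit Defensive.
Import Order.TTheory GRing.Theory Num.Theory.
Local Open Scope ring_scope.

(* V = k^r, modelled as row vectors 'rV[k]_r.  Delta = (alpha_0, ..., alpha_{N-1})
   is an ordered family alpha : 'I_N -> 'rV[k]_r.  Subsets of Delta are encoded
   by subsets of indices {set 'I_N}. *)

Section Arrangement.
Variables (k : fieldType) (r N : nat) (alpha : 'I_N -> 'rV[k]_r).

Definition vecs_of (s : {set 'I_N}) : 'M[k]_(#|s|, r) :=
  \matrix_(i < #|s|) alpha (enum_val i).

Definition lin_indep (s : {set 'I_N}) : bool := row_free (vecs_of s).

Definition is_basis (s : {set 'I_N}) : bool := lin_indep s && (#|s| == r).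

(* S(V) = polynomial functions on V^*: the vector alpha in V is the linear
   polynomial sum_i alpha_i X_i; R_Delta sits inside the fraction field. *)
Definition linpoly (v : 'rV[k]_r) : {mpoly k[r]} := \sum_(i < r) v 0 i *: 'X_i.

Definition phi (s : {set 'I_N}) : {fraction {mpoly k[r]}} :=
  (@FracField.tofrac _ (\prod_(i in s) linpoly (alpha i)))^-1.

Definition kscal (c : k) : {fraction {mpoly k[r]}} := @FracField.tofrac _ (c%:MP).

(* the map from the free vector space on the symbols [sigma] to R_Delta;
   an element of the free space is a coefficient function on index sets,
   required to be supported on B(Delta) *)
Definition supported_on_bases (c : {ffun {set 'I_N} -> k}) : Prop :=
  forall s, ~~ is_basis s -> c s = 0.

Definition eval_free (c : {ffun {set 'I_N} -> k}) : {fraction {mpoly k[r]}} :=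
  \sum_(s | is_basis s) kscal (c s) * phi s.

Definition good_basis (b : {set 'I_N}) : bool :=
  is_basis b &&
  [forall j, (j \notin b) ==> lin_indep (j |: [set i in b | (j < i)%N])].

(* Orlik-Solomon relation r_{sigma, alpha_j}, where cf : 'I_N -> k is the
   coefficient vector of alpha_j in the basis sigma (alpha_j = sum_{i in sigma} cf i alpha_i) *)
Definition os_rel (s : {set 'I_N}) (j : 'I_N) (cf : 'I_N -> k)
  : {ffun {set 'I_N} -> k} :=
  [ffun t => (t == s)%:R
     - \sum_(i in s | cf i != 0) cf i * (t == j |: (s :\ i))%:R].

End Arrangement.

From HB Require Import structures.
From mathcomp Require Import all_boot all_order all_algebra.
From mathcomp Require Import fraction.
From mathcomp Require Import mpoly.
Import Order.TTheory GRing.Theory Num.Theory.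
Local Open Scope ring_scope.

(* Independence: multiplied by the product of all the linear forms, [phi_b]
   becomes the product [prod_compl b] of the forms outside [b]. Induct on N by
   deletion and contraction of the last vector [a]: the good bases avoiding [a]
   are the good bases of the deletion, and their products contain the factor [a];
   the good bases containing [a] are [a] plus the good bases of the contraction
   V/ka, and their products do not involve [a]. Substituting along V -> V/ka kills
   the first kind and maps the second to the products of the contraction, so the
   induction hypothesis applies to both.
   Spanning: if a basis [u] is not good, some [alpha_j] together with the vectors
   of [u] of larger index is dependent, hence [alpha_j] is a combination of those
   vectors alone, and the Orlik-Solomon relation r_(u, alpha_j) expresses [u]
   through bases of smaller index sum. So every symbol is congruent modulo the
   Orlik-Solomon relations to a combination of good symbols; since these
   relations evaluate to zero and the good fractions are free, every relation is a
   combination of Orlik-Solomon relations. *)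

Set Implicit Arguments. Unset Strict Implicit. Unset Printing Implicit Defensive.

Section LinearIndependence.
Variables (k : fieldType) (r N : nat) (alpha : 'I_N -> 'rV[k]_r).
Implicit Types (s : {set 'I_N}) (c d : 'I_N -> k).

Lemma mul_vecs_of s x (xs : x \in s) (v : 'rV_#|s|) :
  v *m vecs_of alpha s = \sum_(i in s) v 0 (enum_rank_in xs i) *: alpha i.
Proof.
rewrite mulmx_sum_row (big_enum_rank xs) /=.
by apply: eq_bigr => i i_s; rewrite rowK enum_rankK_in.
Qed.

Lemma lin_indepP s :
  reflect (forall c, \sum_(i in s) c i *: alpha i = 0 -> {in s, forall i, c i = 0})
          (lin_indep alpha s).
Proof.
apply: (iffP idP) => [free_s c sum0 x xs | indep].
  pose v : 'rV_#|s| := \row_j c (enum_val j).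
  have /eqP : v *m vecs_of alpha s = 0.
    rewrite (mul_vecs_of xs) -[RHS]sum0.
    by apply: eq_bigr => i i_s; rewrite mxE enum_rankK_in.
  rewrite mulmx_free_eq0 // => /eqP/rowP/(_ (enum_rank_in xs x)).
  by rewrite !mxE enum_rankK_in.
apply: inj_row_free => v v0; apply/rowP => j; have xs := enum_valP j.
rewrite (mul_vecs_of xs) in v0.
by have := indep _ v0 _ xs; rewrite enum_valK_in mxE.
Qed.

Lemma lin_indepPn s : ~~ lin_indep alpha s ->
  exists2 c, \sum_(i in s) c i *: alpha i = 0 & exists2 i, i \in s & c i != 0.
Proof.
rewrite /lin_indep -kermx_eq0 => /rowV0Pn [v /sub_kermxP v0 /rV0Pn [j vj]].
have xs := enum_valP j.
exists (fun i => v 0 (enum_rank_in xs i)); first by rewrite -(mul_vecs_of xs).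
by exists (enum_val j); rewrite ?enum_valK_in.
Qed.

Lemma lin_indep_subset s (t : {set 'I_N}) :
  t \subset s -> lin_indep alpha s -> lin_indep alpha t.
Proof.
move=> ts /lin_indepP indep; apply/lin_indepP => c sum0 i it.
pose c' x := if x \in t then c x else 0.
suff /indep/(_ i (subsetP ts i it)) : \sum_(x in s) c' x *: alpha x = 0 by rewrite /c' it.
rewrite -[RHS]sum0 (big_setID t) /= (setIidPr ts) [X in _ + X]big1 ?addr0 => [|x].
  by apply: eq_bigr => x xt; rewrite /c' xt.
by rewrite inE => /andP [/negbTE xt _]; rewrite /c' xt scale0r.
Qed.

Lemma lin_indep_set1 i : alpha i != 0 -> lin_indep alpha [set i].
Proof.
move=> ai; apply/lin_indepP => c; rewrite big_set1 => /eqP.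
by rewrite scaler_eq0 (negbTE ai) orbF => /eqP ci0 x /set1P ->.
Qed.

Lemma lin_indep_neq0 s i : lin_indep alpha s -> i \in s -> alpha i != 0.
Proof.
move=> /lin_indepP indep i_s; apply/eqP => ai0.
suff /indep/(_ i i_s) : \sum_(x in s) (x == i)%:R *: alpha x = 0.
  by rewrite eqxx => /eqP; rewrite oner_eq0.
rewrite (big_setD1 i i_s) /= eqxx scale1r ai0 add0r big1 // => x.
by rewrite in_setD1 => /andP [/negbTE -> _]; rewrite scale0r.
Qed.

Lemma lin_indep_coef_uniq s c d : lin_indep alpha s ->
  \sum_(i in s) c i *: alpha i = \sum_(i in s) d i *: alpha i -> {in s, c =1 d}.
Proof.
move=> /lin_indepP indep E i i_s; apply/eqP; rewrite -subr_eq0; apply/eqP.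
apply: (indep (fun x => c x - d x)) => //.
by under eq_bigr do rewrite scalerBl; rewrite sumrB E subrr.
Qed.

Lemma basis_exchange s j i c : is_basis alpha s -> j \notin s ->
  alpha j = \sum_(t in s) c t *: alpha t -> i \in s -> c i != 0 ->
  is_basis alpha (j |: (s :\ i)).
Proof.
case/andP=> /lin_indepP indep_s /eqP card_s js aj i_s ci.
have js' : j \notin s :\ i by rewrite in_setD1 (negbTE js) andbF.
apply/andP; split; last by rewrite cardsU1 js' -card_s (cardsD1 i s) i_s.
apply/lin_indepP => d sum0.
pose e t := d j * c t + (if t == i then 0 else d t).
have /indep_s e0 : \sum_(t in s) e t *: alpha t = 0.
  rewrite -[RHS]sum0 big_setU1 //= aj scaler_sumr /e.
  under eq_bigr do rewrite scalerDl -scalerA.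
  rewrite big_split /=; congr (_ + _).
  rewrite (big_setD1 i i_s) /= eqxx scale0r add0r.
  by apply: eq_bigr => x; rewrite in_setD1 => /andP [/negbTE ->].
have dj : d j = 0.
  move: (e0 i i_s); rewrite /e eqxx addr0 => /eqP.
  by rewrite mulf_eq0 (negbTE ci) orbF => /eqP.
move=> t; rewrite in_setU1 => /orP [/eqP -> // | ].
rewrite in_setD1 => /andP [/negbTE ti t_s].
by move: (e0 t t_s); rewrite /e ti dj mul0r add0r.
Qed.

Lemma coef_supp_gt s j c : is_basis alpha s -> j \notin s ->
  alpha j = \sum_(t in s) c t *: alpha t ->
  ~~ lin_indep alpha (j |: [set t in s | j < t]%N) ->
  {in s, forall i, c i != 0 -> (j < i)%N}.
Proof.
move=> bs js aj /lin_indepPn [d sum0 [t tT dt]].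
set T := [set t in s | j < t]%N in sum0 tT.
have /lin_indepP indep_T : lin_indep alpha T.
  by apply: lin_indep_subset (andP bs).1; apply/subsetP => x; rewrite inE => /andP [].
have jT : j \notin T by rewrite inE (negbTE js).
rewrite big_setU1 //= in sum0.
have dj : d j != 0.
  apply: contraNneq dt => dj0; rewrite dj0 scale0r add0r in sum0.
  by move: tT; rewrite in_setU1 => /orP [/eqP -> | /(indep_T _ sum0) ->]; rewrite ?dj0.
pose e (x : 'I_N) := if (j < x)%N then - (d x / d j) else 0.
have aj' : alpha j = \sum_(t in s) e t *: alpha t.
  move/eqP: sum0; rewrite addr_eq0 => /eqP sum0.
  apply: (scalerI dj); rewrite scaler_sumr sum0 -sumrN.
  rewrite big_mkcond [RHS]big_mkcond /=; apply: eq_bigr => x _.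
  rewrite /T inE /e; case: (x \in s); case: (j < x)%N => //=; last by rewrite scale0r scaler0.
  by rewrite scalerA mulrN mulrC divfK // scaleNr.
move=> i i_s; rewrite (lin_indep_coef_uniq (andP bs).1 (etrans (esym aj) aj') i_s) /e.
by case: (j < i)%N => //; rewrite eqxx.
Qed.

End LinearIndependence.

Fact linpoly_is_linear (k : fieldType) (r : nat) : linear (@linpoly k r).
Proof.
move=> a u v; rewrite /linpoly scaler_sumr -big_split; apply: eq_bigr => i _.
by rewrite !mxE scalerDl scalerA.
Qed.

HB.instance Definition _ (k : fieldType) (r : nat) :=
  GRing.isLinear.Build k 'rV[k]_r {mpoly k[r]} _ (@linpoly k r) (@linpoly_is_linear k r).

Section LinearForms.
Variables (k : fieldType) (r : nat).
Implicit Types (v : 'rV[k]_r).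

Lemma linpoly_coef v i : (linpoly v)@_U_(i) = v 0 i.
Proof.
rewrite /linpoly raddf_sum (bigD1 i) //= mcoeffZ mcoeffXU eqxx mulr1 big1 ?addr0 //.
by move=> j /negbTE ji; rewrite mcoeffZ mcoeffXU ji mulr0.
Qed.

Lemma linpoly_eq0 v : (linpoly v == 0) = (v == 0).
Proof.
apply/eqP/eqP => [v0|->]; last exact: linear0.
by apply/rowP => i; rewrite -linpoly_coef v0 mxE mcoeff0.
Qed.

Lemma linpoly_comp r' (P : 'M[k]_(r, r')) v :
  linpoly v \mPo [tuple linpoly (row i P) | i < r] = linpoly (v *m P).
Proof.
rewrite [linpoly v]/linpoly raddf_sum mulmx_sum_row raddf_sum; apply: eq_bigr => i _.
by rewrite /= comp_mpolyZ comp_mpolyXU -tnth_nth tnth_mktuple linearZ.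
Qed.

End LinearForms.

Definition prod_compl (k : fieldType) (r N : nat) (alpha : 'I_N -> 'rV[k]_r)
  (b : {set 'I_N}) : {mpoly k[r]} := \prod_(i in ~: b) linpoly (alpha i).

Lemma good_basis_neq0 (k : fieldType) (r N : nat) (alpha : 'I_N -> 'rV[k]_r) b :
  good_basis alpha b -> forall i, alpha i != 0.
Proof.
case/andP=> /andP [indep_b _] /forallP good_b i.
have [i_b | i_b] := boolP (i \in b); first exact: lin_indep_neq0 indep_b i_b.
by apply: lin_indep_neq0 (implyP (good_b i) i_b) _; rewrite setU11.
Qed.

Section LiftSets.
Variable N : nat.
Implicit Types (t : {set 'I_N}) (b : {set 'I_N.+1}).
Local Notation lift_last := (@lift N.+1 ord_max).

Definition lift_set t : {set 'I_N.+1} := lift_last @: t.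
Definition unlift_set b : {set 'I_N} := [set j | lift_last j \in b].

Lemma mem_lift_set j t : (lift_last j \in lift_set t) = (j \in t).
Proof. by rewrite mem_imset //; exact: lift_inj. Qed.

Lemma max_notin_lift_set t : ord_max \notin lift_set t.
Proof. by apply/imsetP => -[j _ /eqP]; rewrite (negbTE (neq_lift _ _)). Qed.

Lemma lift_setK : cancel lift_set unlift_set.
Proof. by move=> t; apply/setP => j; rewrite inE mem_lift_set. Qed.

Lemma unlift_setU1_max t : unlift_set (ord_max |: lift_set t) = t.
Proof.
by apply/setP => j; rewrite !inE mem_lift_set eq_sym (negbTE (neq_lift _ _)).
Qed.

Lemma unlift_setK b : ord_max \notin b -> lift_set (unlift_set b) = b.
Proof.
move=> b_max; apply/setP => i; case: (unliftP ord_max i) => [j ->|->].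
  by rewrite mem_lift_set inE.
by rewrite (negbTE (max_notin_lift_set _)) (negbTE b_max).
Qed.

Lemma unlift_setK_max b : ord_max \in b -> ord_max |: lift_set (unlift_set b) = b.
Proof.
move=> b_max; apply/setP => i; rewrite in_setU1; case: (unliftP ord_max i) => [j ->|->].
  by rewrite mem_lift_set inE eq_sym (negbTE (neq_lift _ _)).
by rewrite eqxx b_max.
Qed.

Lemma big_lift_set (V : nmodType) (F : 'I_N.+1 -> V) t :
  \sum_(i in lift_set t) F i = \sum_(j in t) F (lift_last j).
Proof. by rewrite big_imset //; move=> x y _ _; exact: lift_inj. Qed.

Lemma card_lift_set t : #|lift_set t| = #|t|.
Proof. by rewrite card_imset //; exact: lift_inj. Qed.

Lemma lift_setU1 j t : lift_last j |: lift_set t = lift_set (j |: t).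
Proof. by rewrite /lift_set imsetU1. Qed.

Lemma lift_set_gt j t :
  [set i in lift_set t | lift_last j < i]%N = lift_set [set i in t | j < i]%N.
Proof.
apply/setP => i; case: (unliftP ord_max i) => [i' ->|->].
  by rewrite inE !mem_lift_set inE !lift_max.
by rewrite inE (negbTE (max_notin_lift_set _)) (negbTE (max_notin_lift_set _)).
Qed.

Lemma lift_setU1_max_gt j t :
  [set i in ord_max |: lift_set t | lift_last j < i]%N =
  ord_max |: lift_set [set i in t | j < i]%N.
Proof.
apply/setP => i; case: (unliftP ord_max i) => [i' ->|->].
  by rewrite inE !in_setU1 !mem_lift_set inE !lift_max eq_sym (negbTE (neq_lift _ _)).
by rewrite inE !in_setU1 eqxx lift_max /= ltn_ord.
Qed.

Lemma lift_set_gt_max t : [set i in lift_set t | @ord_max N < i]%N = set0.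
Proof.
by apply/setP => i; rewrite !inE ltnNge -ltnS ltn_ord andbF.
Qed.

Lemma forall_ord_max (p : pred 'I_N.+1) :
  [forall i, p i] = p ord_max && [forall j, p (lift_last j)].
Proof.
apply/forallP/andP => [p_all | [p_max /forallP p_lift] i].
  by split => //; apply/forallP => j; exact: p_all.
by case: (unliftP ord_max i) => [j ->|->].
Qed.

Lemma prod_setC_max (R : comPzRingType) (F : 'I_N.+1 -> R) b :
  \prod_(i in ~: b) F i =
  (\prod_(j in ~: unlift_set b) F (lift_last j)) * (if ord_max \in b then 1 else F ord_max).
Proof.
rewrite big_mkcond big_ord_recr /=.
congr (_ * _); last by rewrite inE; case: (_ \in b).
rewrite [RHS]big_mkcond; apply: eq_bigr => j _.
have -> : widen_ord (leqnSn N) j = lift_last j.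
  by apply: val_inj; rewrite /= /bump leqNgt ltn_ord.
by rewrite !inE.
Qed.

End LiftSets.

Lemma quotient_by_line (k : fieldType) (r : nat) (a : 'rV[k]_r) : a != 0 ->
  exists r' (P : 'M[k]_(r, r')),
    r = r'.+1 /\ forall v : 'rV_r, v *m P = 0 <-> exists e, v = e *: a.
Proof.
move=> a_neq0; exists (\rank (cokermx a)), (col_base (cokermx a)); split.
  rewrite mxrank_coker rank_rV a_neq0 subn1 prednK //.
  by have := rank_leq_col a; rewrite rank_rV a_neq0.
have kerE v : (v *m col_base (cokermx a) == 0) = (v <= a)%MS.
  by rewrite -(mulmx_free_eq0 _ (row_base_free (cokermx a))) -mulmxA mulmx_base submxE.
move=> v; split => [/eqP | [e ->]]; last by apply/eqP; rewrite kerE scalemx_sub.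
rewrite kerE => /submxP [D ->]; exists (D 0 0).
by rewrite {1}(mx11_scalar D) mul_scalar_mx.
Qed.

Section DeletionContraction.
Variables (k : fieldType) (r N : nat) (alpha : 'I_N.+1 -> 'rV[k]_r).
Implicit Type t : {set 'I_N}.
Local Notation a := (alpha ord_max).
Local Notation lift_last := (@lift N.+1 ord_max).

Definition deletion (j : 'I_N) := alpha (lift_last j).

Lemma lin_indep_lift_set t : lin_indep alpha (lift_set t) = lin_indep deletion t.
Proof.
apply/lin_indepP/lin_indepP => indep c sum0.
  move=> j jt; have := indep (fun i => oapp c 0 (unlift ord_max i)) _ (lift_last j).
  rewrite liftK mem_lift_set; apply => //.
  by rewrite big_lift_set; under eq_bigr do rewrite liftK.
move=> i /imsetP [j jt ->]; apply: (indep (fun j => c (lift_last j))) => //.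
by move: sum0; rewrite big_lift_set.
Qed.

Lemma good_basis_lift_set t :
  a != 0 -> good_basis alpha (lift_set t) = good_basis deletion t.
Proof.
move=> a_neq0.
rewrite /good_basis /is_basis lin_indep_lift_set card_lift_set forall_ord_max.
rewrite (negbTE (max_notin_lift_set t)) lift_set_gt_max setU0 lin_indep_set1 //=.
congr (_ && _); apply: eq_forallb => j.
by rewrite mem_lift_set lift_set_gt lift_setU1 lin_indep_lift_set.
Qed.

Lemma prod_compl_lift_set t :
  prod_compl alpha (lift_set t) = prod_compl deletion t * linpoly a.
Proof. by rewrite /prod_compl prod_setC_max lift_setK (negbTE (max_notin_lift_set t)). Qed.

Lemma prod_compl_setU1_max t :
  prod_compl alpha (ord_max |: lift_set t) = prod_compl deletion t.
Proof. by rewrite /prod_compl prod_setC_max unlift_setU1_max setU11 mulr1. Qed.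

Variables (r' : nat) (P : 'M[k]_(r, r')).

Definition contraction (j : 'I_N) := deletion j *m P.

Lemma prod_compl_comp t :
  prod_compl deletion t \mPo [tuple linpoly (row i P) | i < r] = prod_compl contraction t.
Proof. by rewrite /prod_compl rmorph_prod; apply: eq_bigr => i _; exact: linpoly_comp. Qed.

Hypothesis a_neq0 : a != 0.
Hypothesis kerP : forall v : 'rV_r, v *m P = 0 <-> exists e, v = e *: a.

Lemma lin_indep_setU1_max t :
  lin_indep alpha (ord_max |: lift_set t) = lin_indep contraction t.
Proof.
have aP : a *m P = 0 by apply/kerP; exists 1; rewrite scale1r.
have sum_max c : \sum_(i in ord_max |: lift_set t) c i *: alpha i =
    c ord_max *: a + \sum_(j in t) c (lift_last j) *: deletion j.
  by rewrite big_setU1 ?max_notin_lift_set //= big_lift_set.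
apply/lin_indepP/lin_indepP => indep c sum0.
  have [e sum_e] : exists e, \sum_(j in t) c j *: deletion j = e *: a.
    apply/kerP; rewrite mulmx_suml -[RHS]sum0.
    by apply: eq_bigr => j _; rewrite -scalemxAl.
  move=> j jt; have := indep (fun i => oapp c (- e) (unlift ord_max i)) _ (lift_last j).
  rewrite liftK in_setU1 mem_lift_set jt orbT; apply => //.
  rewrite sum_max unlift_none /=; under eq_bigr do rewrite liftK /=.
  by rewrite sum_e scaleNr addNr.
rewrite sum_max in sum0.
have c_lift : {in t, forall j, c (lift_last j) = 0}.
  apply: indep; rewrite -[RHS](mul0mx _ P) -sum0 mulmxDl -scalemxAl aP scaler0 add0r.
  by rewrite mulmx_suml; apply: eq_bigr => j _; rewrite scalemxAl.
have c_max : c ord_max = 0.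
  move: sum0; rewrite big1 => [|j jt]; last by rewrite c_lift // scale0r.
  by rewrite addr0 => /eqP; rewrite scaler_eq0 (negbTE a_neq0) orbF => /eqP.
by move=> i; rewrite in_setU1 => /orP [/eqP -> // | /imsetP [j jt ->]]; exact: c_lift.
Qed.

Hypothesis r_eq : r = r'.+1.

Lemma good_basis_setU1_max t :
  good_basis alpha (ord_max |: lift_set t) = good_basis contraction t.
Proof.
rewrite /good_basis /is_basis.
have -> : (#|ord_max |: lift_set t| == r) = (#|t| == r').
  by rewrite cardsU1 max_notin_lift_set card_lift_set r_eq.
rewrite lin_indep_setU1_max forall_ord_max setU11 /=.
congr (_ && _); apply: eq_forallb => j.
rewrite in_setU1 eq_sym (negbTE (neq_lift _ _)) mem_lift_set lift_setU1_max_gt.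
by rewrite setUCA lift_setU1 lin_indep_setU1_max.
Qed.

Lemma sum_good_basis_split (c : {set 'I_N.+1} -> k) :
  \sum_(b | good_basis alpha b) c b *: prod_compl alpha b =
  (\sum_(t | good_basis deletion t) c (lift_set t) *: prod_compl deletion t) * linpoly a
  + \sum_(t | good_basis contraction t) c (ord_max |: lift_set t) *: prod_compl deletion t.
Proof.
rewrite (bigID (fun b : {set 'I_N.+1} => ord_max \in b)) /= addrC mulr_suml; congr (_ + _).
  rewrite (reindex_onto (@lift_set N) (@unlift_set N)) /=; last first.
    by move=> b /andP [_ /unlift_setK].
  apply: eq_big => t; last by rewrite prod_compl_lift_set scalerAl.
  by rewrite lift_setK eqxx andbT max_notin_lift_set andbT good_basis_lift_set.
rewrite (reindex_onto (fun t => ord_max |: lift_set t) (@unlift_set N)) /=; last first.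
  by move=> b /andP [_ /unlift_setK_max].
apply: eq_big => t; last by rewrite prod_compl_setU1_max.
by rewrite unlift_setU1_max eqxx andbT setU11 andbT good_basis_setU1_max.
Qed.

End DeletionContraction.

Lemma prod_compl_good_free (k : fieldType) (N r : nat) (alpha : 'I_N -> 'rV[k]_r)
    (c : {set 'I_N} -> k) :
  \sum_(b | good_basis alpha b) c b *: prod_compl alpha b = 0 ->
  forall b, good_basis alpha b -> c b = 0.
Proof.
elim: N r alpha c => [|N IHN] r alpha c sum0 b good_b.
  have b_uniq (b' : {set 'I_0}) : b' = b by apply/setP => -[].
  rewrite (big_pred1 b) in sum0; last by move=> b'; rewrite (b_uniq b') good_b /= eqxx.
  have prod1 : prod_compl alpha b = 1 by rewrite /prod_compl big1 // => -[].
  by move/eqP: sum0; rewrite prod1 scaler_eq0 oner_eq0 orbF => /eqP.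
have a_neq0 := good_basis_neq0 good_b ord_max.
have [r' [P [r_eq kerP]]] := quotient_by_line a_neq0.
rewrite (sum_good_basis_split a_neq0 kerP r_eq) in sum0.
set lq := [tuple linpoly (row i P) | i < r].
have aP : linpoly (alpha ord_max) \mPo lq = 0.
  rewrite linpoly_comp; apply/eqP; rewrite linpoly_eq0.
  by apply/eqP/kerP; exists 1; rewrite scale1r.
have con0 : forall t, good_basis (contraction alpha P) t -> c (ord_max |: lift_set t) = 0.
  apply: (IHN _ _ (fun t => c (ord_max |: lift_set t))).
  have := congr1 (comp_mpoly lq) sum0.
  rewrite raddf0 raddfD /= rmorphM /= aP mulr0 add0r raddf_sum => sum_con0.
  rewrite -[RHS]sum_con0.
  by apply: eq_bigr => t _; rewrite /= comp_mpolyZ prod_compl_comp.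
have del0 : forall t, good_basis (deletion alpha) t -> c (lift_set t) = 0.
  apply: (IHN _ _ (fun t => c (lift_set t))).
  move: sum0; rewrite [X in _ + X]big1 => [|t /con0 ->]; last by rewrite scale0r.
  by rewrite addr0 => /eqP; rewrite mulf_eq0 linpoly_eq0 (negbTE a_neq0) orbF => /eqP.
have [b_max | b_max] := boolP (ord_max \in b).
  by rewrite -(unlift_setK_max b_max) con0 // -good_basis_setU1_max ?unlift_setK_max.
by rewrite -(unlift_setK b_max) del0 // -good_basis_lift_set ?unlift_setK.
Qed.

HB.instance Definition _ (k : fieldType) (r : nat) :=
  GRing.RMorphism.copy (kscal r) (@FracField.tofrac _ \o @mpolyC r k).

Fact eval_free_is_zmod_morphism (k : fieldType) (r N : nat) (alpha : 'I_N -> 'rV[k]_r) :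
  zmod_morphism (eval_free alpha).
Proof.
by move=> f g; rewrite /eval_free -sumrB; apply: eq_bigr => s _; rewrite !ffunE rmorphB mulrBl.
Qed.

HB.instance Definition _ (k : fieldType) (r N : nat) (alpha : 'I_N -> 'rV[k]_r) :=
  GRing.isZmodMorphism.Build _ _ (eval_free alpha) (eval_free_is_zmod_morphism alpha).

Section Fractions.
Variables (k : fieldType) (r N : nat) (alpha : 'I_N -> 'rV[k]_r).
Hypothesis alpha_neq0 : forall i, alpha i != 0.
Local Notation tofrac := (@FracField.tofrac _).
Implicit Types (s u : {set 'I_N}).

Definition form i : {fraction {mpoly k[r]}} := tofrac (linpoly (alpha i)).

Lemma form_neq0 i : form i != 0.
Proof. by rewrite tofrac_eq0 linpoly_eq0. Qed.

Lemma form_comb s j (c : 'I_N -> k) : alpha j = \sum_(i in s) c i *: alpha i ->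
  form j = \sum_(i in s) kscal r (c i) * form i.
Proof.
move=> aj; rewrite /form aj (raddf_sum (@linpoly k r)) rmorph_sum; apply: eq_bigr => i _.
by rewrite /= linearZ /= -mul_mpolyC rmorphM.
Qed.

Lemma phiE s : phi alpha s = (\prod_(i in s) form i)^-1.
Proof. by rewrite /phi rmorph_prod. Qed.

Lemma phi_exchange s i j : j \notin s -> i \in s ->
  phi alpha (j |: (s :\ i)) = form i * phi alpha s / form j.
Proof.
move=> js i_s; have js' : j \notin s :\ i by rewrite in_setD1 (negbTE js) andbF.
rewrite !phiE big_setU1 //= (big_setD1 i i_s) /= !invfM.
by rewrite mulrA mulfV ?form_neq0 // mul1r mulrC.
Qed.

(* Clearing denominators: [tofrac (prod_compl alpha b)] is [phi_b] times the
   product of all the forms, so good [phi_b] are free as good [prod_compl] are. *)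
Lemma phi_good_free (c : {set 'I_N} -> k) :
  \sum_(b | good_basis alpha b) kscal r (c b) * phi alpha b = 0 ->
  forall b, good_basis alpha b -> c b = 0.
Proof.
move=> sum0; apply: prod_compl_good_free; apply/eqP; rewrite -tofrac_eq0; apply/eqP.
have prod_complE b : tofrac (prod_compl alpha b) = (\prod_i form i) * phi alpha b.
  rewrite /prod_compl phiE rmorph_prod (bigID (mem b) predT) /= [X in X * _]mulrC mulfK.
    by apply: eq_bigl => i; rewrite in_setC.
  by apply/prodf_neq0 => i _; exact: form_neq0.
rewrite raddf_sum -[RHS](mulr0 (\prod_i form i)) -[X in _ * X]sum0 mulr_sumr.
by apply: eq_bigr => b _; rewrite /= -mul_mpolyC rmorphM /= prod_complE mulrCA.
Qed.

Definition delta u : {ffun {set 'I_N} -> k} := [ffun t => (t == u)%:R].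

Lemma eval_freeZ x (f : {ffun {set 'I_N} -> k}) :
  eval_free alpha [ffun t => x * f t] = kscal r x * eval_free alpha f.
Proof.
by rewrite /eval_free mulr_sumr; apply: eq_bigr => t _; rewrite ffunE rmorphM mulrA.
Qed.

Lemma eval_free_delta u : is_basis alpha u -> eval_free alpha (delta u) = phi alpha u.
Proof.
move=> bu; rewrite /eval_free (bigD1 u bu) /= ffunE eqxx rmorph1 mul1r big1 ?addr0 //.
by move=> t /andP [_ /negbTE tu]; rewrite ffunE tu rmorph0 mul0r.
Qed.

Lemma os_relE s j (c : 'I_N -> k) : os_rel s j c =
  delta s - \sum_(i in s | c i != 0) [ffun t => c i * delta (j |: (s :\ i)) t].
Proof.
apply/ffunP => t; rewrite !ffunE sum_ffunE.
by congr (_ - _); apply: eq_bigr => i _; rewrite !ffunE.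
Qed.

Lemma ffun_delta_expand (c : {ffun {set 'I_N} -> k}) :
  supported_on_bases alpha c ->
  c = \sum_(t | is_basis alpha t) [ffun u => c t * delta t u].
Proof.
move=> c_supp; apply/ffunP => u; rewrite sum_ffunE.
have [bu | nbu] := boolP (is_basis alpha u).
  rewrite (bigD1 u bu) /= !ffunE eqxx mulr1 big1 ?addr0 // => t /andP [_ tu].
  by rewrite !ffunE eq_sym (negbTE tu) mulr0.
rewrite c_supp // big1 // => t bt; rewrite !ffunE.
suff -> : (u == t) = false by rewrite mulr0.
by apply: contraNF nbu => /eqP ->.
Qed.

Section OrlikSolomon.
Variables (s : {set 'I_N}) (j : 'I_N) (c : 'I_N -> k).
Hypotheses (bs : is_basis alpha s) (js : j \notin s).
Hypothesis aj : alpha j = \sum_(i in s) c i *: alpha i.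

Lemma os_rel_supported : supported_on_bases alpha (os_rel s j c).
Proof.
move=> t bt; rewrite ffunE; have -> : (t == s) = false by apply: contraNF bt => /eqP ->.
rewrite sub0r big1 ?oppr0 // => i /andP [i_s ci].
have -> : (t == j |: (s :\ i)) = false.
  by apply: contraNF bt => /eqP ->; exact: basis_exchange bs js aj i_s ci.
by rewrite mulr0.
Qed.

Lemma eval_free_os_rel : eval_free alpha (os_rel s j c) = 0.
Proof.
rewrite os_relE raddfB (raddf_sum (eval_free alpha)) /= eval_free_delta // big_mkcondr /=.
rewrite (eq_bigr (fun i => (kscal r (c i) * form i) * (phi alpha s / form j))); last first.
  move=> i i_s; case: eqP => [-> | /eqP ci]; first by rewrite rmorph0 !mul0r.
  rewrite eval_freeZ eval_free_delta ?phi_exchange ?mulrA //.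
  exact: basis_exchange bs js aj i_s ci.
by rewrite -mulr_suml -(form_comb aj) mulrCA mulfV ?form_neq0 // mulr1 subrr.
Qed.

End OrlikSolomon.

Variable cf : {set 'I_N} -> 'I_N -> 'I_N -> k.
Hypothesis cfP : forall s j, is_basis alpha s -> j \notin s ->
  alpha j = \sum_(i in s) cf s j i *: alpha i.

Definition good_part (g : {set 'I_N} -> k) : {ffun {set 'I_N} -> k} :=
  [ffun t => if good_basis alpha t then g t else 0].

Definition os_comb (d : {set 'I_N} -> 'I_N -> k) : {ffun {set 'I_N} -> k} :=
  \sum_(s | is_basis alpha s) \sum_(j | j \notin s) [ffun t => d s j * os_rel s j (cf s j) t].

Lemma os_combE d t :
  os_comb d t =
  \sum_(s | is_basis alpha s) \sum_(j | j \notin s) d s j * os_rel s j (cf s j) t.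
Proof.
rewrite sum_ffunE; apply: eq_bigr => s _.
by rewrite sum_ffunE; apply: eq_bigr => j _; rewrite ffunE.
Qed.

Lemma good_part0 : good_part (fun=> 0) = 0.
Proof. by apply/ffunP => t; rewrite !ffunE if_same. Qed.

Lemma os_comb0 : os_comb (fun _ _ => 0) = 0.
Proof.
apply/ffunP => t; rewrite os_combE ffunE big1 // => s _.
by rewrite big1 // => j _; rewrite mul0r.
Qed.

Lemma eval_free_good_part g :
  eval_free alpha (good_part g) = \sum_(b | good_basis alpha b) kscal r (g b) * phi alpha b.
Proof.
rewrite /eval_free [RHS](bigID (is_basis alpha)) /= [X in _ + X]big1; last first.
  by move=> b /andP [/andP [] ->].
rewrite addr0 [RHS]big_mkcondl /=; apply: eq_bigr => b _; rewrite ffunE.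
by case: ifP => // _; rewrite rmorph0 mul0r.
Qed.

Lemma eval_free_os_comb d : eval_free alpha (os_comb d) = 0.
Proof.
rewrite (raddf_sum (eval_free alpha)) big1 // => s bs.
rewrite (raddf_sum (eval_free alpha)) big1 // => j js.
by rewrite /= eval_freeZ eval_free_os_rel ?mulr0 //; exact: cfP.
Qed.

Definition good_mod_os (f : {ffun {set 'I_N} -> k}) : Prop :=
  exists g d, f = good_part g + os_comb d.

Lemma good_mod_os0 : good_mod_os 0.
Proof. by exists (fun=> 0), (fun _ _ => 0); rewrite good_part0 os_comb0 addr0. Qed.

Lemma good_mod_osD f1 f2 : good_mod_os f1 -> good_mod_os f2 -> good_mod_os (f1 + f2).
Proof.
move=> [g1 [d1 ->]] [g2 [d2 ->]].
exists (fun t => g1 t + g2 t), (fun s j => d1 s j + d2 s j); rewrite addrACA; congr (_ + _).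
  by apply/ffunP => t; rewrite !ffunE; case: ifP; rewrite ?addr0.
rewrite /os_comb -big_split; apply: eq_bigr => s _; rewrite -big_split; apply: eq_bigr => j _.
by apply/ffunP => t; rewrite !ffunE mulrDl.
Qed.

Lemma good_mod_osZ x f : good_mod_os f -> good_mod_os [ffun t => x * f t].
Proof.
move=> [g [d ->]]; exists (fun t => x * g t), (fun s j => x * d s j).
apply/ffunP => t; rewrite !ffunE !os_combE mulrDr mulr_sumr; congr (_ + _).
  by case: ifP; rewrite ?mulr0.
by apply: eq_bigr => s _; rewrite mulr_sumr; apply: eq_bigr => j _; rewrite mulrA.
Qed.

Lemma good_mod_os_sum (I : finType) (P : pred I) (x : I -> k) F :
  (forall i, P i -> good_mod_os (F i)) ->
  good_mod_os (\sum_(i | P i) [ffun t => x i * F i t]).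
Proof.
move=> FP; apply: (big_ind good_mod_os good_mod_os0 good_mod_osD) => i Pi.
exact: good_mod_osZ (FP i Pi).
Qed.

Lemma good_mod_os_os_rel s j : is_basis alpha s -> j \notin s ->
  good_mod_os (os_rel s j (cf s j)).
Proof.
move=> bs js; exists (fun=> 0), (fun s' j' => ((s' == s) && (j' == j))%:R).
rewrite good_part0 add0r; apply/ffunP => t; rewrite os_combE (bigD1 s bs) /=.
rewrite [X in _ + X]big1 => [|s' /andP [_ /negbTE ->]]; last first.
  by rewrite big1 // => j' _; rewrite mul0r.
rewrite addr0 (bigD1 j js) /= !eqxx mul1r big1 ?addr0 // => j' /andP [_ /negbTE ->].
by rewrite andbF mul0r.
Qed.

(* Induction on the index sum of [u]: the Orlik-Solomon relation at a witness
   [j] of non-goodness expresses [delta u] through bases trading some [i > j]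
   for [j] (coef_supp_gt). *)
Lemma good_mod_os_delta u : is_basis alpha u -> good_mod_os (delta u).
Proof.
have [n] := ubnP (\sum_(i in u) i)%N; elim: n u => // n IHn u weight_u bu.
case good_u : (good_basis alpha u).
  exists (fun t => (t == u)%:R), (fun _ _ => 0); rewrite os_comb0 addr0.
  by apply/ffunP => t; rewrite !ffunE; case: eqP => [-> | _]; rewrite ?good_u ?if_same.
move: good_u; rewrite /good_basis bu => /negbT /forallPn [j].
rewrite negb_imply => /andP [ju dep].
have aj := cfP bu ju.
have -> : delta u = os_rel u j (cf u j) +
    \sum_(i in u | cf u j i != 0) [ffun t => cf u j i * delta (j |: (u :\ i)) t].
  by rewrite os_relE subrK.
apply: good_mod_osD; first exact: good_mod_os_os_rel.
apply: good_mod_os_sum => i /andP [i_u ci]; apply: IHn; last first.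
  exact: basis_exchange bu ju aj i_u ci.
have ji := coef_supp_gt bu ju aj dep i_u ci.
have ju' : j \notin u :\ i by rewrite in_setD1 (negbTE ju) andbF.
move: weight_u; rewrite big_setU1 //= (big_setD1 i i_u) /= => weight_u.
by rewrite -ltnS; apply: leq_trans weight_u; rewrite ltnS ltn_add2r.
Qed.

End Fractions.

Theorem mainTheorem9 (k : fieldType) (r N : nat) (alpha : 'I_N -> 'rV[k]_r)
  (cf : {set 'I_N} -> 'I_N -> 'I_N -> k) :
  [pchar k] =i pred0 ->
  (forall i, alpha i != 0) ->
  injective alpha ->
  \rank (\matrix_(i < N) alpha i) = r ->
  (forall s j, is_basis alpha s -> j \notin s ->
     alpha j = \sum_(i in s) cf s j i *: alpha i) ->
  ((forall c : {set 'I_N} -> k,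
      \sum_(b | good_basis alpha b) kscal r (c b) * phi alpha b = 0 ->
      forall b, good_basis alpha b -> c b = 0)
   /\
   (forall s, is_basis alpha s ->
      exists c : {set 'I_N} -> k,
        phi alpha s = \sum_(b | good_basis alpha b) kscal r (c b) * phi alpha b))
  /\
  ((forall s j, is_basis alpha s -> j \notin s ->
      supported_on_bases alpha (os_rel s j (cf s j)) /\
      eval_free alpha (os_rel s j (cf s j)) = 0)
   /\
   (forall c : {ffun {set 'I_N} -> k},
      supported_on_bases alpha c -> eval_free alpha c = 0 ->
      exists d : {set 'I_N} -> 'I_N -> k,
        forall t, c t = \sum_(s | is_basis alpha s) \sum_(j | j \notin s)
               d s j * os_rel s j (cf s j) t)).
Proof.
move=> _ alpha_neq0 _ _ cfP.
have eval_good_mod_os g d : eval_free alpha (good_part alpha g + os_comb alpha cf d) =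
    \sum_(b | good_basis alpha b) kscal r (g b) * phi alpha b.
  by rewrite raddfD /= eval_free_good_part (eval_free_os_comb alpha_neq0 cfP) addr0.
split; [split|split].
- exact: phi_good_free.
- move=> s bs; have [g [d delta_s]] := good_mod_os_delta cfP bs.
  by exists g; rewrite -eval_free_delta // delta_s eval_good_mod_os.
- move=> s j bs js; have aj := cfP s j bs js.
  by split; [exact: os_rel_supported aj | exact: eval_free_os_rel aj].
move=> c c_supp c0.
have [g [d c_eq]] : good_mod_os alpha cf c.
  rewrite (ffun_delta_expand c_supp); apply: good_mod_os_sum => t bt.
  exact: good_mod_os_delta.
have g0 : forall b, good_basis alpha b -> g b = 0.
  by apply: (phi_good_free alpha_neq0 (c := g)); rewrite -(eval_good_mod_os g d) -c_eq.
exists d => t; rewrite c_eq !ffunE -os_combE.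
by case: ifP => [/g0 -> | _]; rewrite add0r.
Qed.
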